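(* Let $t$ be any integer and $G_j=G_j(a,b)$ a gibonacci sequence. If $p$ is a non-negative integer, then \[ \sum_{n=0}^\infty\binom{n+p}{p}\frac{H_nG_{n+t}}{2^n}=(H_p+\ln2)2^{p+1}G_{t+2p+2}+\frac{2^{p+2}}{\sqrt5}\bigl(G_{t+2p+3}+G_{t+2p+1}\bigr)\ln\alpha-2^{p+1}\sum_{k=1}^p\frac{G_{t+2p-2k+2}}{2^kk}. \] If $p$ is a non-negative even integer, then \begin{align*} \sum_{n=0}^\infty(-1)^n\binom{n+p}{p}\frac{H_nG_{n+t}}{2^n}&=\Bigl(\frac2{\sqrt5}\Bigr)^{p+1}\left(\frac{H_p-\ln(\sqrt5/2)}{\sqrt5}\bigl(G_{t-p}+G_{t-p-2}\bigr)-G_{t-p-1}\ln\alpha\right)\\ &\quad-\sum_{k=1}^{p/2}\frac{(4/5)^{p/2-k}}{5k}\left(G_{t+2k-p}+\frac{6k-1}{2k-1}G_{t+2k-p-2}\right), \end{align*} while if $p$ is an odd positive integer, then \begin{align*} \sum_{n=0}^\infty(-1)^n\binom{n+p}{p}\frac{H_nG_{n+t}}{2^n}&=\Bigl(\frac2{\sqrt5}\Bigr)^{p+1}\left(\bigl(H_p-\ln(\sqrt5/2)\bigr)G_{t-p-1}-\frac{\ln\alpha}{\sqrt5}\bigl(G_{t-p}+G_{t-p-2}\bigr)\right)\\ &\quad-\frac8{25}\sum_{k=1}^{(p-1)/2}\frac{(4/5)^{(p-1)/2-k}}{2k-1}\left(\frac{14k-5}{4k}G_{t+2k-p-1}+G_{t+2k-p-3}\right)-\frac{2(G_t+G_{t-2})}{5p}.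 \end{align*}
   Context: $H_n=\sum_{j=1}^n\frac1j$ ($H_0=0$). $\alpha=(1+\sqrt5)/2$, $\beta=-1/\alpha$. For numbers $a,b$ not both zero, the gibonacci sequence $G_j=G_j(a,b)$ is defined by $G_0=a$, $G_1=b$, $G_j=G_{j-1}+G_{j-2}$, extended to negative indices by $G_{-j}=G_{-(j-2)}-G_{-(j-1)}$; equivalently $G_j=\frac{(b-a\beta)\alpha^j+(a\alpha-b)\beta^j}{\alpha-\beta}$. Empty sums are $0$. *)

From Stdlib Require Import Reals ZArith Arith.
From Coquelicot Require Import Coquelicot.
Open Scope R_scope.

Fixpoint harm (n : nat) : R :=
  match n with
  | O => 0
  | S m => harm m + / INR (S m)
  end.

Definition binom (n k : nat) : R := Binomial.C n k.

(* (G_n, G_{n+1}) for n >= 0 *)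
Fixpoint gib_pos (a b : R) (n : nat) : R * R :=
  match n with
  | O => (a, b)
  | S m => let (x, y) := gib_pos a b m in (y, x + y)
  end.

(* (G_{-n}, G_{-n+1}) for n >= 0, using G_{-n-1} = G_{-n+1} - G_{-n} *)
Fixpoint gib_neg (a b : R) (n : nat) : R * R :=
  match n with
  | O => (a, b)
  | S m => let (x, y) := gib_neg a b m in (y - x, x)
  end.

Definition gib (a b : R) (j : Z) : R :=
  match j with
  | Z0 => a
  | Zpos q => fst (gib_pos a b (Pos.to_nat q))
  | Zneg q => fst (gib_neg a b (Pos.to_nat q))
  end.

Definition alpha : R := (1 + sqrt 5) / 2.

From Stdlib Require Import Reals ZArith Arith Lra Lia FunctionalExtensionality.
From Coquelicot Require Import Coquelicot.
Open Scope R_scope.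

(* By Binet's formula [G_j = c1 alpha^j + c2 beta^j], and both sides are linear in [G], so it
   suffices to take [G_j = r^j] with [r^2 = r + 1].  The series is then [r^t f_p(x)] with
   [x = r/2] or [x = -r/2], where
     f_p(x) = sum_n C(n+p,p) H_n x^n = (H_p + ln y) y^(p+1) - sum_(k=1..p) y^(p+1-k)/k,
     y = 1/(1 - x);
   this generating function follows by induction on [p] from [ln (1/(1-x)) = sum x^n/n]:
   Pascal's rule makes step [p+1] the product of step [p] with the geometric series.
   For [x = r/2] one finds [y = 2 r^2]; for [x = -r/2] one finds [y = 2/(2 + r)], with
   [y^2 = 4/(5 r^2)] and [y = 2 (1 + r^-2)/5], and eliminating [y] two steps at a time
   turns the tail sum into the sums of the statement. *)

(* Coquelicot states these over an abstract [AbelianMonoid]/[NormedModule]; over [R] the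
   generated goals are equations in [R], to which [ring] and [field] apply. *)
Lemma sum_n_m_ext_loc_R (u v : nat -> R) (n m : nat) :
  (forall k, (n <= k <= m)%nat -> u k = v k) -> sum_n_m u n m = sum_n_m v n m.
Proof. exact (sum_n_m_ext_loc u v n m). Qed.

Lemma sum_n_m_Sm_R (u : nat -> R) (n m : nat) :
  (n <= S m)%nat -> sum_n_m u n (S m) = sum_n_m u n m + u (S m).
Proof. exact (sum_n_Sm (G := R_AbelianMonoid) u n m). Qed.

Lemma sum_n_m_mult_l_R (c : R) (u : nat -> R) (n m : nat) :
  sum_n_m (fun k => c * u k) n m = c * sum_n_m u n m.
Proof. exact (sum_n_m_mult_l (K := R_Ring) c u n m). Qed.

Lemma is_series_ext_R (u v : nat -> R) (l : R) :
  (forall n, u n = v n) -> is_series u l -> is_series v l.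
Proof. exact (is_series_ext u v l). Qed.

Lemma ex_series_Rabs_geom (x : R) : Rabs x < 1 -> ex_series (fun n => Rabs (x ^ n)).
Proof.
  intros Hx. exists (/ (1 - Rabs x)).
  eapply is_series_ext; [|apply is_series_geom; rewrite Rabs_Rabsolu; exact Hx].
  intros n. apply RPow_abs.
Qed.

Lemma ex_series_Rabs_lin (u v : nat -> R) (c : R) :
  ex_series (fun n => Rabs (u n)) -> ex_series (fun n => Rabs (v n)) ->
  ex_series (fun n => Rabs (u n + c * v n)).
Proof.
  intros Hu Hv.
  apply (@ex_series_le R_AbsRing R_CompleteNormedModule)
    with (b := fun n => Rabs (u n) + Rabs c * Rabs (v n)).
  - intros n. change norm with Rabs. rewrite Rabs_Rabsolu, <- Rabs_mult. apply Rabs_triang.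
  - apply (@ex_series_plus R_AbsRing R_NormedModule); [exact Hu|].
    apply (@ex_series_scal R_AbsRing R_NormedModule). exact Hv.
Qed.

(* [u] is the Cauchy product of [w] with the geometric series of ratio [x]. *)
Lemma is_series_geom_recursion (x W : R) (w u : nat -> R) :
  Rabs x < 1 -> is_series w W -> ex_series (fun n => Rabs (w n)) ->
  u 0%nat = w 0%nat -> (forall n, u (S n) = x * u n + w (S n)) ->
  is_series u (W / (1 - x)) /\ ex_series (fun n => Rabs (u n)).
Proof.
  intros Hx HW HWabs H0 HS.
  assert (Hconv : forall n, u n = sum_f_R0 (fun k => w k * x ^ (n - k)) n).
  { induction n as [|n IH].
    - simpl. rewrite H0. ring.
    - rewrite HS, IH, tech5, Nat.sub_diag, pow_O, scal_sum, Rmult_1_r. f_equal.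
      apply sum_eq. intros i Hi.
      replace (S n - i)%nat with (S (n - i)) by lia. simpl pow. ring. }
  assert (Hgeom := is_series_geom x Hx).
  assert (Hgeom_abs := ex_series_Rabs_geom x Hx).
  split.
  - eapply is_series_ext; [intros n; symmetry; apply Hconv|].
    apply is_series_mult; assumption.
  - destruct HWabs as [SW HSW], Hgeom_abs as [Sg HSg].
    apply (@ex_series_le R_AbsRing R_CompleteNormedModule)
      with (b := fun n => sum_f_R0 (fun k => Rabs (w k) * Rabs (x ^ (n - k))) n).
    + intros n. change norm with Rabs. rewrite Rabs_Rabsolu, Hconv.
      eapply Rle_trans; [apply sum_f_R0_triangle|].
      right. apply sum_eq. intros; apply Rabs_mult.
    + exists (SW * Sg).
      apply (is_series_mult (fun n => Rabs (w n)) (fun n => Rabs (x ^ n))); try assumption.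
      * exists SW. eapply is_series_ext; [|exact HSW]. intros; simpl; now rewrite Rabs_Rabsolu.
      * exists Sg. eapply is_series_ext; [|exact HSg]. intros; simpl; now rewrite Rabs_Rabsolu.
Qed.

(** * The generating function of [C(n+p,p) H_n] *)

Definition log_coef (n : nat) : R := match n with O => 0 | S k => / INR (S k) end.

Lemma Rabs_log_coef_le (n : nat) : Rabs (log_coef n) <= 1.
Proof.
  destruct n as [|n]; cbn [log_coef].
  - rewrite Rabs_R0. lra.
  - assert (Hn : 1 <= INR (S n)) by (rewrite S_INR; pose proof (pos_INR n); lra).
    rewrite Rabs_right by (left; apply Rinv_0_lt_compat; lra).
    rewrite <- Rinv_1. apply Rinv_le_contravar; lra.
Qed.

Lemma CV_radius_log_coef (x : R) : Rabs x < 1 -> Rbar_lt (Rabs x) (CV_radius log_coef).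
Proof.
  intros Hx. set (r := (Rabs x + 1) / 2).
  assert (Hr : Rbar_le r (CV_radius log_coef)).
  { apply (proj1 (CV_radius_bounded log_coef)). exists 1. intros n.
    assert (Hrn : 0 <= r ^ n <= 1).
    { assert (0 <= Rabs x) by apply Rabs_pos.
      assert (0 <= r <= 1) by (unfold r; lra).
      induction n; simpl; nra. }
    rewrite Rabs_mult, (Rabs_right (r ^ n)) by lra.
    pose proof (Rabs_log_coef_le n). pose proof (Rabs_pos (log_coef n)). nra. }
  assert (Rabs x < r) by (unfold r; lra).
  destruct (CV_radius log_coef); simpl in *; lra.
Qed.

(* Both sides vanish at 0 and have derivative 1/(1 - x) on (-1, 1). *)
Lemma is_series_log (x : R) :
  Rabs x < 1 -> is_series (fun n => log_coef n * x ^ n) (- ln (1 - x)).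
Proof.
  intros Hx.
  set (f := fun t => PSeries log_coef t + ln (1 - t)).
  assert (Hf' : forall t, Rabs t < 1 -> is_derive f t 0).
  { intros t Ht. apply Rabs_def2 in Ht as Ht'.
    assert (H1 := is_derive_PSeries log_coef t (CV_radius_log_coef t Ht)).
    assert (E : PSeries (PS_derive log_coef) t = / (1 - t)).
    { rewrite (PSeries_ext _ (fun _ => 1)).
      - apply is_pseries_unique, is_pseries_R.
        eapply is_series_ext; [|apply is_series_geom; exact Ht]. intros; simpl; ring.
      - intros n. unfold PS_derive, log_coef. field. apply not_0_INR. lia. }
    rewrite E in H1.
    assert (H2 : is_derive (fun t => ln (1 - t)) t (- / (1 - t)))
      by (auto_derive; [lra | field; lra]).
    replace 0 with (plus (/ (1 - t)) (- / (1 - t))) by (unfold plus; simpl; ring).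
    exact (is_derive_plus _ _ _ _ _ H1 H2). }
  assert (Hf0 : f 0 = 0).
  { unfold f. rewrite PSeries_0, Rminus_0_r, ln_1. simpl. ring. }
  assert (Hfx : f x = 0).
  { apply Rabs_def2 in Hx.
    destruct (Rtotal_order x 0) as [Hlt|[->|Hgt]].
    - rewrite <- Hf0. apply (eq_is_derive f); [|lra].
      intros t Ht. apply Hf'. apply Rabs_def1; lra.
    - exact Hf0.
    - rewrite <- Hf0. symmetry. apply (eq_is_derive f); [|lra].
      intros t Ht. apply Hf'. apply Rabs_def1; lra. }
  unfold f in Hfx. replace (- ln (1 - x)) with (PSeries log_coef x) by lra.
  apply is_pseries_R, PSeries_correct, CV_radius_inside, CV_radius_log_coef, Hx.
Qed.

Lemma binom_diag (p : nat) : binom (0 + p) p = 1.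
Proof.
  unfold binom, Binomial.C. rewrite Nat.add_0_l, Nat.sub_diag.
  pose proof (INR_fact_neq_0 p) as Hfact. simpl. field. exact Hfact.
Qed.

Lemma binom_n0 (n : nat) : binom (n + 0) 0 = 1.
Proof.
  unfold binom, Binomial.C. rewrite Nat.add_0_r, Nat.sub_0_r.
  pose proof (INR_fact_neq_0 n) as Hfact. simpl. field. exact Hfact.
Qed.

Lemma binom_pascal (n p : nat) :
  binom (S n + S p) (S p) = binom (n + S p) (S p) + binom (S n + p) p.
Proof.
  unfold binom. rewrite Rplus_comm.
  replace (S n + p)%nat with (n + S p)%nat by lia.
  replace (S n + S p)%nat with (S (n + S p)) by lia.
  rewrite <- pascal by lia. ring.
Qed.

Lemma binom_absorb (n p : nat) :
  binom (n + S p) (S p) / INR (S n) = binom (S n + p) p / INR (S p).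
Proof.
  unfold binom, Binomial.C.
  replace (n + S p - S p)%nat with n by lia.
  replace (S n + p - p)%nat with (S n) by lia.
  replace (S n + p)%nat with (n + S p)%nat by lia.
  change (Factorial.fact (S p)) with (S p * Factorial.fact p)%nat.
  change (Factorial.fact (S n)) with (S n * Factorial.fact n)%nat.
  rewrite !mult_INR.
  assert (INR (S n) <> 0) by (apply not_0_INR; lia).
  assert (INR (S p) <> 0) by (apply not_0_INR; lia).
  pose proof (INR_fact_neq_0 n). pose proof (INR_fact_neq_0 p).
  field. auto.
Qed.

Lemma is_series_binom_geom (x : R) (p : nat) : Rabs x < 1 ->
  is_series (fun n => binom (n + p) p * x ^ n) ((/ (1 - x)) ^ (p + 1))
  /\ ex_series (fun n => Rabs (binom (n + p) p * x ^ n)).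
Proof.
  intros Hx. induction p as [|p [IHsum IHabs]].
  - split.
    + eapply is_series_ext; [|rewrite pow_1; apply is_series_geom, Hx].
      intros n. now rewrite binom_n0, Rmult_1_l.
    + eapply ex_series_ext; [|apply ex_series_Rabs_geom, Hx].
      intros n. now rewrite binom_n0, Rmult_1_l.
  - replace ((/ (1 - x)) ^ (S p + 1)) with ((/ (1 - x)) ^ (p + 1) / (1 - x))
      by (rewrite Nat.add_succ_l; simpl; unfold Rdiv; ring).
    apply (is_series_geom_recursion x _ _ _ Hx IHsum IHabs).
    + rewrite !binom_diag. reflexivity.
    + intros n. rewrite binom_pascal. simpl pow. ring.
Qed.

Fixpoint harm_tail (p : nat) (y : R) : R :=
  match p with O => 0 | S q => y * harm_tail q y + y / INR (S q) end.

Definition harm_gf (p : nat) (x : R) : R :=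
  (harm p + ln (/ (1 - x))) * (/ (1 - x)) ^ (p + 1) - harm_tail p (/ (1 - x)).

Lemma harm_gf_succ (p : nat) (x : R) : x <> 1 ->
  harm_gf (S p) x
  = (harm_gf p x + / INR (S p) * (/ (1 - x)) ^ (p + 1)) / (1 - x) - / INR (S p) * / (1 - x).
Proof.
  intros Hx. unfold harm_gf. cbn [harm harm_tail].
  rewrite Nat.add_succ_l. simpl pow. unfold Rdiv. ring.
Qed.

Lemma is_series_harm_geom (x : R) : Rabs x < 1 ->
  is_series (fun n => harm n * x ^ n) (harm_gf 0 x)
  /\ ex_series (fun n => Rabs (harm n * x ^ n)).
Proof.
  intros Hx. apply Rabs_def2 in Hx as Hx'.
  assert (Hlog_abs : ex_series (fun n => Rabs (log_coef n * x ^ n))).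
  { apply (@ex_series_le R_AbsRing R_CompleteNormedModule) with (b := fun n => Rabs (x ^ n)).
    - intros n. change norm with Rabs. rewrite Rabs_Rabsolu, Rabs_mult.
      pose proof (Rabs_log_coef_le n). pose proof (Rabs_pos (x ^ n)). nra.
    - apply ex_series_Rabs_geom, Hx. }
  replace (harm_gf 0 x) with (- ln (1 - x) / (1 - x))
    by (unfold harm_gf; rewrite ln_Rinv by lra; simpl; field; lra).
  apply (is_series_geom_recursion x _ _ _ Hx (is_series_log x Hx) Hlog_abs).
  - simpl. ring.
  - intros n. cbn [harm log_coef pow]. field. apply not_0_INR. lia.
Qed.

Lemma is_series_binom_harm (x : R) (p : nat) : Rabs x < 1 ->
  is_series (fun n => binom (n + p) p * harm n * x ^ n) (harm_gf p x)
  /\ ex_series (fun n => Rabs (binom (n + p) p * harm n * x ^ n)).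
Proof.
  intros Hx. apply Rabs_def2 in Hx as Hx'.
  induction p as [|p [IHsum IHabs]].
  - destruct (is_series_harm_geom x Hx) as [Hsum Habs]. split.
    + eapply is_series_ext; [|exact Hsum]. intros n. simpl. now rewrite binom_n0, Rmult_1_l.
    + eapply ex_series_ext; [|exact Habs]. intros n. simpl. now rewrite binom_n0, Rmult_1_l.
  - set (c := / INR (S p)).
    destruct (is_series_binom_geom x p Hx) as [Bsum Babs].
    (* The correction [c x^n] makes the recursion exact, thanks to [binom_absorb]. *)
    destruct (is_series_geom_recursion x _
      (fun n => binom (n + p) p * harm n * x ^ n + c * (binom (n + p) p * x ^ n))
      (fun n => binom (n + S p) (S p) * harm n * x ^ n + c * x ^ n) Hx
      (is_series_plus _ _ _ _ IHsum (is_series_scal c _ _ Bsum))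
      (ex_series_Rabs_lin _ _ c IHabs Babs)) as [Usum Uabs].
    + rewrite !binom_diag. simpl. ring.
    + intros n. rewrite binom_pascal. cbn [harm].
      assert (E := binom_absorb n p). unfold Rdiv in E. fold c in E.
      transitivity (x * (binom (n + S p) (S p) * harm n * x ^ n + c * x ^ n) +
        (binom (S n + p) p * (harm n + / INR (S n)) * x ^ S n
         + c * (binom (S n + p) p * x ^ S n))
        + x ^ S n * (binom (n + S p) (S p) * / INR (S n) - binom (S n + p) p * c)).
      * simpl pow. ring.
      * rewrite E. ring.
    + split.
      * rewrite harm_gf_succ by lra.
        eapply is_series_ext_R;
          [|exact (is_series_minus _ _ _ _ Usum (is_series_scal c _ _ (is_series_geom x Hx)))].
        intros n. cbn. unfold mult. simpl. ring.
      * eapply ex_series_ext;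
          [|exact (ex_series_Rabs_lin _ _ (- c) Uabs (ex_series_Rabs_geom x Hx))].
        intros n. cbv beta. f_equal. ring.
Qed.

Lemma harm_tail_sum (p : nat) (y : R) :
  harm_tail p y = sum_n_m (fun k => y ^ (p + 1 - k) / INR k) 1 p.
Proof.
  induction p as [|p IH].
  - rewrite sum_n_m_zero by lia. reflexivity.
  - rewrite sum_n_m_Sm_R by lia. cbn [harm_tail]. rewrite IH, <- sum_n_m_mult_l_R.
    replace (S p + 1 - S p)%nat with 1%nat by lia. rewrite pow_1. f_equal.
    apply sum_n_m_ext_loc_R. intros k Hk.
    replace (S p + 1 - k)%nat with (S (p + 1 - k)) by lia. simpl pow. unfold Rdiv. ring.
Qed.

Lemma harm_tail_even (y z : R) (m : nat) : y * y = 4 * z / 5 -> y = 2 * (1 + z) / 5 ->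
  harm_tail (2 * m) y
  = sum_n_m (fun k => (4 / 5) ^ (m - k) / (5 * INR k)
       * (z ^ (m - k) + (6 * INR k - 1) / (2 * INR k - 1) * z ^ (m - k + 1))) 1 m.
Proof.
  intros Hyy Hy. induction m as [|m IH].
  - rewrite sum_n_m_zero by lia. reflexivity.
  - rewrite sum_n_m_Sm_R by lia.
    rewrite (sum_n_m_ext_loc_R _ (fun k => 4 * z / 5 * ((4 / 5) ^ (m - k) / (5 * INR k)
       * (z ^ (m - k) + (6 * INR k - 1) / (2 * INR k - 1) * z ^ (m - k + 1))))).
    2:{ intros k Hk. replace (S m - k)%nat with (S (m - k)) by lia.
        simpl pow. unfold Rdiv. ring. }
    rewrite sum_n_m_mult_l_R, <- IH, Nat.sub_diag, !pow_O, Nat.add_0_l, pow_1.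
    replace (2 * S m)%nat with (S (S (2 * m))) by lia. cbn [harm_tail].
    transitivity (y * y * harm_tail (2 * m) y + y * y / INR (S (2 * m))
                  + y / INR (S (S (2 * m)))); [unfold Rdiv; ring|].
    rewrite Hyy, Hy, !S_INR, mult_INR. simpl (INR 2).
    pose proof (pos_INR m). field. lra.
Qed.

Lemma harm_tail_odd (y z : R) (m : nat) : y * y = 4 * z / 5 -> y = 2 * (1 + z) / 5 ->
  harm_tail (2 * m + 1) y
  = 8 / 25 * sum_n_m (fun k => (4 / 5) ^ (m - k) / (2 * INR k - 1)
       * ((14 * INR k - 5) / (4 * INR k) * z ^ (m + 1 - k) + z ^ (m + 2 - k))) 1 m
    + 2 * (1 + z) / (5 * INR (2 * m + 1)).
Proof.
  intros Hyy Hy. induction m as [|m IH].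
  - rewrite sum_n_m_zero by lia. simpl. rewrite Hy. change zero with 0. field.
  - rewrite sum_n_m_Sm_R by lia.
    rewrite (sum_n_m_ext_loc_R _ (fun k => 4 * z / 5 * ((4 / 5) ^ (m - k) / (2 * INR k - 1)
       * ((14 * INR k - 5) / (4 * INR k) * z ^ (m + 1 - k) + z ^ (m + 2 - k))))).
    2:{ intros k Hk.
        replace (S m + 1 - k)%nat with (S (m + 1 - k)) by lia.
        replace (S m + 2 - k)%nat with (S (m + 2 - k)) by lia.
        replace (S m - k)%nat with (S (m - k)) by lia. simpl pow. unfold Rdiv. ring. }
    rewrite sum_n_m_mult_l_R, Nat.sub_diag.
    replace (S m + 1 - S m)%nat with 1%nat by lia.
    replace (S m + 2 - S m)%nat with 2%nat by lia.
    replace (2 * S m + 1)%nat with (S (S (2 * m + 1))) by lia. cbn [harm_tail].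
    transitivity (y * y * harm_tail (2 * m + 1) y + y * y / INR (S (2 * m + 1))
                  + y / INR (S (S (2 * m + 1)))); [unfold Rdiv; ring|].
    rewrite IH. set (T := sum_n_m _ 1 m).
    rewrite Hyy, Hy, !S_INR, !plus_INR, mult_INR. simpl (INR 2). simpl (INR 1).
    pose proof (pos_INR m). field. lra.
Qed.

(** * Golden ratio and Binet's formula *)

Definition beta : R := (1 - sqrt 5) / 2.

Lemma sqrt5_sq : sqrt 5 * sqrt 5 = 5.
Proof. apply sqrt_sqrt. lra. Qed.

Lemma sqrt5_bounds : 2 < sqrt 5 < 3.
Proof. pose proof sqrt5_sq. assert (0 < sqrt 5) by (apply sqrt_lt_R0; lra). nra. Qed.

Lemma alpha_sq : alpha * alpha = alpha + 1.
Proof. unfold alpha. pose proof sqrt5_sq. nra. Qed.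

Lemma beta_sq : beta * beta = beta + 1.
Proof. unfold beta. pose proof sqrt5_sq. nra. Qed.

Lemma alpha_gt_1 : 1 < alpha.
Proof. unfold alpha. pose proof sqrt5_bounds. lra. Qed.

Lemma alpha_mul_beta : alpha * beta = -1.
Proof. unfold alpha, beta. pose proof sqrt5_sq. nra. Qed.

Lemma alpha_sign : 2 * alpha - 1 = 1 * sqrt 5.
Proof. unfold alpha. field. Qed.

Lemma beta_sign : 2 * beta - 1 = -1 * sqrt 5.
Proof. unfold beta. field. Qed.

Lemma ln_alpha_sq : ln (alpha * alpha) = 2 * 1 * ln alpha.
Proof. pose proof alpha_gt_1. rewrite ln_mult by lra. ring. Qed.

Lemma ln_beta_sq : ln (beta * beta) = 2 * -1 * ln alpha.
Proof.
  pose proof alpha_gt_1.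
  replace (beta * beta) with (/ (alpha * alpha))
    by (pose proof alpha_mul_beta; field_simplify_eq; nra).
  rewrite ln_Rinv, ln_mult by nra. ring.
Qed.

Lemma golden_root_bounds (r : R) : r * r = r + 1 -> -1 < r < 2.
Proof. intros Hr. nra. Qed.

Lemma golden_root_neq0 (r : R) : r * r = r + 1 -> r <> 0.
Proof. intros Hr ->. lra. Qed.

Lemma powerRZ_golden (r : R) (j : Z) : r * r = r + 1 ->
  powerRZ r (j + 2) = powerRZ r (j + 1) + powerRZ r j.
Proof.
  intros Hr. pose proof (golden_root_neq0 r Hr).
  rewrite !powerRZ_add by assumption. simpl. rewrite Rmult_1_r, Hr. ring.
Qed.

Section Binet.
Variables a b : R.

Let binet (j : Z) : R :=
  (b - a * beta) / sqrt 5 * powerRZ alpha j + (a * alpha - b) / sqrt 5 * powerRZ beta j.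

Lemma binet_rec (j : Z) : binet (j + 2) = binet (j + 1) + binet j.
Proof. unfold binet. rewrite !powerRZ_golden by (apply alpha_sq || apply beta_sq). ring. Qed.

Lemma gib_pos_binet (n : nat) : gib_pos a b n = (binet (Z.of_nat n), binet (Z.of_nat n + 1)).
Proof.
  induction n as [|n IH]; simpl gib_pos.
  - pose proof sqrt5_bounds. unfold binet, alpha, beta. simpl. f_equal; field; lra.
  - rewrite IH, Nat2Z.inj_succ, <- Z.add_1_r.
    replace (Z.of_nat n + 1 + 1)%Z with (Z.of_nat n + 2)%Z by ring.
    rewrite binet_rec. f_equal. ring.
Qed.

Lemma gib_neg_binet (n : nat) :
  gib_neg a b n = (binet (- Z.of_nat n), binet (- Z.of_nat n + 1)).
Proof.
  induction n as [|n IH]; simpl gib_neg.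
  - exact (gib_pos_binet 0).
  - rewrite IH, Nat2Z.inj_succ.
    replace (- Z.of_nat n + 1)%Z with (- Z.succ (Z.of_nat n) + 2)%Z by lia.
    rewrite binet_rec.
    replace (- Z.succ (Z.of_nat n) + 1)%Z with (- Z.of_nat n)%Z by lia.
    f_equal. ring.
Qed.

Lemma gib_binet (j : Z) : gib a b j = binet j.
Proof.
  destruct j as [|q|q]; unfold gib.
  - exact (f_equal fst (gib_pos_binet 0)).
  - rewrite gib_pos_binet, positive_nat_Z. reflexivity.
  - rewrite gib_neg_binet, positive_nat_Z. reflexivity.
Qed.

End Binet.

(** * Reduction to geometric sequences *)

Lemma powerRZ_add_nat (r : R) (t : Z) (m : nat) : r <> 0 ->
  powerRZ r (t + Z.of_nat m) = powerRZ r t * r ^ m.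
Proof. intros Hr. rewrite powerRZ_add, <- pow_powerRZ by exact Hr. reflexivity. Qed.

Lemma powerRZ_sub_double (r : R) (t : Z) (m : nat) : r <> 0 ->
  powerRZ r (t - Z.of_nat (2 * m)) = powerRZ r t * (/ (r * r)) ^ m.
Proof.
  intros Hr. unfold Z.sub. rewrite powerRZ_add, powerRZ_neg', <- pow_powerRZ by exact Hr.
  rewrite pow_mult, pow_inv. simpl. rewrite Rmult_1_r. reflexivity.
Qed.

Lemma is_series_binom_harm_powerRZ (r c : R) (t : Z) (p : nat) :
  r <> 0 -> Rabs (c * r) < 1 ->
  is_series (fun n => c ^ n * (binom (n + p) p * (harm n * powerRZ r (Z.of_nat n + t))))
    (harm_gf p (c * r) * powerRZ r t).
Proof.
  intros Hr Hcr.
  destruct (is_series_binom_harm (c * r) p Hcr) as [Hsum _].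
  eapply is_series_ext_R; [|exact (is_series_scal_r (powerRZ r t) _ _ Hsum)].
  intros n. rewrite Z.add_comm, powerRZ_add_nat, Rpow_mult_distr by exact Hr. ring.
Qed.

Definition plain_term (G : Z -> R) (t : Z) (p n : nat) : R :=
  binom (n + p) p * (harm n * G (Z.of_nat n + t)%Z) / 2 ^ n.

Definition alt_term (G : Z -> R) (t : Z) (p n : nat) : R :=
  (-1) ^ n * binom (n + p) p * (harm n * G (Z.of_nat n + t)%Z) / 2 ^ n.

Definition plain_rhs (G : Z -> R) (t : Z) (p : nat) : R :=
  (harm p + ln 2) * 2 ^ (p + 1) * G (t + 2 * Z.of_nat p + 2)%Z
  + 2 ^ (p + 2) / sqrt 5
    * (G (t + 2 * Z.of_nat p + 3)%Z + G (t + 2 * Z.of_nat p + 1)%Z) * ln alpha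
  - 2 ^ (p + 1)
    * sum_n_m (fun k => G (t + 2 * Z.of_nat p - 2 * Z.of_nat k + 2)%Z / (2 ^ k * INR k)) 1 p.

Definition alt_even_rhs (G : Z -> R) (t : Z) (p : nat) : R :=
  (2 / sqrt 5) ^ (p + 1)
    * ((harm p - ln (sqrt 5 / 2)) / sqrt 5 * (G (t - Z.of_nat p)%Z + G (t - Z.of_nat p - 2)%Z)
       - G (t - Z.of_nat p - 1)%Z * ln alpha)
  - sum_n_m (fun k => (4 / 5) ^ (p / 2 - k) / (5 * INR k)
      * (G (t + 2 * Z.of_nat k - Z.of_nat p)%Z
         + (6 * INR k - 1) / (2 * INR k - 1) * G (t + 2 * Z.of_nat k - Z.of_nat p - 2)%Z))
      1 (p / 2).

Definition alt_odd_rhs (G : Z -> R) (t : Z) (p : nat) : R :=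
  (2 / sqrt 5) ^ (p + 1)
    * ((harm p - ln (sqrt 5 / 2)) * G (t - Z.of_nat p - 1)%Z
       - ln alpha / sqrt 5 * (G (t - Z.of_nat p)%Z + G (t - Z.of_nat p - 2)%Z))
  - 8 / 25
    * sum_n_m (fun k => (4 / 5) ^ ((p - 1) / 2 - k) / (2 * INR k - 1)
        * ((14 * INR k - 5) / (4 * INR k) * G (t + 2 * Z.of_nat k - Z.of_nat p - 1)%Z
           + G (t + 2 * Z.of_nat k - Z.of_nat p - 3)%Z)) 1 ((p - 1) / 2)
  - 2 * (G t + G (t - 2)%Z) / (5 * INR p).

Definition linear_functional (F : (Z -> R) -> R) : Prop :=
  forall G1 G2 c1 c2, F (fun j => c1 * G1 j + c2 * G2 j) = c1 * F G1 + c2 * F G2.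

Lemma linear_functional_sum (F : nat -> (Z -> R) -> R) (n m : nat) :
  (forall k, linear_functional (F k)) ->
  linear_functional (fun G => sum_n_m (fun k => F k G) n m).
Proof.
  intros HF G1 G2 c1 c2.
  rewrite (sum_n_m_ext_loc_R _ (fun k => c1 * F k G1 + c2 * F k G2)) by (intros; apply HF).
  rewrite (sum_n_m_plus (G := R_AbelianMonoid)), !sum_n_m_mult_l_R. reflexivity.
Qed.

Lemma plain_term_linear (t : Z) (p n : nat) : linear_functional (fun G => plain_term G t p n).
Proof. intros G1 G2 c1 c2. unfold plain_term. field. apply pow_nonzero. lra. Qed.

Lemma alt_term_linear (t : Z) (p n : nat) : linear_functional (fun G => alt_term G t p n).
Proof. intros G1 G2 c1 c2. unfold alt_term. field. apply pow_nonzero. lra. Qed.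

Lemma plain_rhs_linear (t : Z) (p : nat) : linear_functional (fun G => plain_rhs G t p).
Proof.
  intros G1 G2 c1 c2. unfold plain_rhs.
  pose proof (linear_functional_sum
    (fun k G => G (t + 2 * Z.of_nat p - 2 * Z.of_nat k + 2)%Z / (2 ^ k * INR k)) 1 p
    ltac:(intros k H1 H2 d1 d2; unfold Rdiv; ring) G1 G2 c1 c2) as Hsum.
  cbv beta in Hsum. rewrite Hsum. ring.
Qed.

Lemma alt_even_rhs_linear (t : Z) (p : nat) : linear_functional (fun G => alt_even_rhs G t p).
Proof.
  intros G1 G2 c1 c2. unfold alt_even_rhs.
  pose proof (linear_functional_sum
    (fun k G => (4 / 5) ^ (p / 2 - k) / (5 * INR k)
       * (G (t + 2 * Z.of_nat k - Z.of_nat p)%Z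
          + (6 * INR k - 1) / (2 * INR k - 1) * G (t + 2 * Z.of_nat k - Z.of_nat p - 2)%Z))
    1 (p / 2) ltac:(intros k H1 H2 d1 d2; ring) G1 G2 c1 c2) as Hsum.
  cbv beta in Hsum. rewrite Hsum. ring.
Qed.

Lemma alt_odd_rhs_linear (t : Z) (p : nat) : linear_functional (fun G => alt_odd_rhs G t p).
Proof.
  intros G1 G2 c1 c2. unfold alt_odd_rhs.
  pose proof (linear_functional_sum
    (fun k G => (4 / 5) ^ ((p - 1) / 2 - k) / (2 * INR k - 1)
       * ((14 * INR k - 5) / (4 * INR k) * G (t + 2 * Z.of_nat k - Z.of_nat p - 1)%Z
          + G (t + 2 * Z.of_nat k - Z.of_nat p - 3)%Z))
    1 ((p - 1) / 2) ltac:(intros k H1 H2 d1 d2; ring) G1 G2 c1 c2) as Hsum.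
  cbv beta in Hsum. rewrite Hsum. unfold Rdiv. ring.
Qed.

Lemma is_series_binet (term : (Z -> R) -> nat -> R) (rhs : (Z -> R) -> R) (a b : R) :
  (forall n, linear_functional (fun G => term G n)) -> linear_functional rhs ->
  is_series (term (powerRZ alpha)) (rhs (powerRZ alpha)) ->
  is_series (term (powerRZ beta)) (rhs (powerRZ beta)) ->
  is_series (term (gib a b)) (rhs (gib a b)).
Proof.
  intros Hterm Hrhs Halpha Hbeta.
  set (c1 := (b - a * beta) / sqrt 5). set (c2 := (a * alpha - b) / sqrt 5).
  replace (gib a b) with (fun j => c1 * powerRZ alpha j + c2 * powerRZ beta j)
    by (extensionality j; symmetry; apply gib_binet).
  rewrite Hrhs.
  eapply is_series_ext_R;
    [|exact (is_series_plus _ _ _ _ (is_series_scal c1 _ _ Halpha) (is_series_scal c2 _ _ Hbeta))].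
  intros n. symmetry. apply Hterm.
Qed.

Lemma is_series_plain_term_powerRZ (r : R) (t : Z) (p : nat) : r <> 0 -> Rabs r < 2 ->
  is_series (plain_term (powerRZ r) t p) (harm_gf p (/ 2 * r) * powerRZ r t).
Proof.
  intros Hr Hr2.
  eapply is_series_ext_R; [|apply is_series_binom_harm_powerRZ; [exact Hr|]].
  - intros n. unfold plain_term. rewrite pow_inv. field. apply pow_nonzero. lra.
  - rewrite Rabs_mult, Rabs_inv, Rabs_right by lra. lra.
Qed.

Lemma is_series_alt_term_powerRZ (r : R) (t : Z) (p : nat) : r <> 0 -> Rabs r < 2 ->
  is_series (alt_term (powerRZ r) t p) (harm_gf p (- / 2 * r) * powerRZ r t).
Proof.
  intros Hr Hr2.
  eapply is_series_ext_R; [|apply is_series_binom_harm_powerRZ; [exact Hr|]].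
  - intros n. unfold alt_term. replace (- / 2) with (-1 * / 2) by ring.
    rewrite Rpow_mult_distr, pow_inv. field. apply pow_nonzero. lra.
  - rewrite Rabs_mult, Rabs_Ropp, Rabs_inv, Rabs_right by lra. lra.
Qed.

(* [r] is [alpha] (with [s = 1]) or [beta] (with [s = -1]). *)
Section GoldenRoot.
Variables r s : R.
Hypothesis r_golden : r * r = r + 1.
Hypothesis r_sign : 2 * r - 1 = s * sqrt 5.
Hypothesis ln_r_sq : ln (r * r) = 2 * s * ln alpha.

Lemma golden_sign_sq : s * s = 1.
Proof.
  assert (H5 : (s * sqrt 5) * (s * sqrt 5) = 5) by (rewrite <- r_sign; nra).
  replace ((s * sqrt 5) * (s * sqrt 5)) with (s * s * (sqrt 5 * sqrt 5)) in H5 by ring.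
  rewrite sqrt5_sq in H5. lra.
Qed.

Lemma golden_sign : s = 1 \/ s = -1.
Proof. pose proof golden_sign_sq. destruct (Rle_or_lt 0 s); [left | right]; nra. Qed.

Lemma golden_sign_mul : s * sqrt 5 * r = r + 2.
Proof. rewrite <- r_sign. nra. Qed.

Let r_bounds : -1 < r < 2 := golden_root_bounds r r_golden.
Let r_neq0 : r <> 0 := golden_root_neq0 r r_golden.

Lemma powerRZ_golden_sum (j : Z) :
  powerRZ r (j + 1) + powerRZ r (j - 1) = s * sqrt 5 * powerRZ r j.
Proof.
  replace (j + 1)%Z with (j - 1 + 2)%Z by ring. replace j with (j - 1 + 1)%Z at 3 by ring.
  rewrite !powerRZ_add by exact r_neq0. simpl. rewrite <- r_sign.
  set (P := powerRZ r (j - 1)).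
  transitivity (P * (r * r + 1)); [ring|].
  transitivity (P * (2 * (r * r) - r)); [rewrite r_golden; ring | ring].
Qed.

Lemma plain_rhs_powerRZ (t : Z) (p : nat) :
  plain_rhs (powerRZ r) t p = harm_gf p (/ 2 * r) * powerRZ r t.
Proof.
  assert (Hy : / (1 - / 2 * r) = 2 * (r * r)).
  { rewrite r_golden. field_simplify_eq; [nra | lra]. }
  unfold plain_rhs, harm_gf. rewrite Hy, harm_tail_sum, ln_mult, ln_r_sq by nra.
  replace (t + 2 * Z.of_nat p + 3)%Z with (t + 2 * Z.of_nat p + 2 + 1)%Z by ring.
  replace (t + 2 * Z.of_nat p + 1)%Z with (t + 2 * Z.of_nat p + 2 - 1)%Z by ring.
  rewrite powerRZ_golden_sum.
  replace (t + 2 * Z.of_nat p + 2)%Z with (t + Z.of_nat (2 * (p + 1)))%Z by lia.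
  rewrite powerRZ_add_nat, pow_mult by assumption.
  rewrite (sum_n_m_ext_loc_R _
    (fun k => powerRZ r t / 2 ^ (p + 1) * ((2 * (r * r)) ^ (p + 1 - k) / INR k))).
  2:{ intros k Hk.
      replace (t + 2 * Z.of_nat p - 2 * Z.of_nat k + 2)%Z
        with (t + Z.of_nat (2 * (p + 1 - k)))%Z by lia.
      rewrite powerRZ_add_nat, pow_mult, Rpow_mult_distr by assumption.
      replace (2 ^ (p + 1)) with (2 ^ (p + 1 - k) * 2 ^ k)
        by (rewrite <- pow_add; f_equal; lia).
      assert (INR k <> 0) by (apply not_0_INR; lia).
      pose proof (pow_nonzero 2 k). pose proof (pow_nonzero 2 (p + 1 - k)).
      replace (r ^ 2) with (r * r) by ring. field. auto. }
  rewrite sum_n_m_mult_l_R, Rpow_mult_distr.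
  replace (2 ^ (p + 2)) with (2 * 2 ^ (p + 1))
    by (replace (p + 2)%nat with (S (p + 1)) by lia; reflexivity).
  pose proof (pow_nonzero 2 (p + 1)). pose proof sqrt5_bounds.
  replace (r ^ 2) with (r * r) by ring. field. lra.
Qed.

Lemma alt_ratio_eq : / (1 - - / 2 * r) = 2 * s / (sqrt 5 * r).
Proof.
  pose proof golden_sign_sq.
  replace (sqrt 5 * r) with (s * (r + 2))
    by (rewrite <- golden_sign_mul;
        transitivity (s * s * (sqrt 5 * r)); [ring | rewrite golden_sign_sq; ring]).
  assert (s <> 0) by (intros ->; lra).
  field. lra.
Qed.

Lemma alt_ratio_sq : / (1 - - / 2 * r) * / (1 - - / 2 * r) = 4 * / (r * r) / 5.
Proof.
  assert ((r + 2) * (r + 2) = 5 * (r * r)) by nra.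
  field_simplify_eq; [nra | lra].
Qed.

Lemma alt_ratio_lin : / (1 - - / 2 * r) = 2 * (1 + / (r * r)) / 5.
Proof.
  assert ((r * r + 1) * (r + 2) = 5 * (r * r)) by nra.
  field_simplify_eq; [nra | lra].
Qed.

Lemma ln_alt_ratio : ln (/ (1 - - / 2 * r)) = - ln (sqrt 5 / 2) - s * ln alpha.
Proof.
  pose proof golden_sign_mul. pose proof sqrt5_bounds.
  assert (Hsr : 0 < s * r).
  { replace (s * r) with ((r + 2) / sqrt 5) by (rewrite <- golden_sign_mul; field; lra).
    apply Rdiv_lt_0_compat; lra. }
  (* [ln (s r) = ln (r^2) / 2] since [(s r)^2 = r^2]. *)
  assert (Hln : ln (s * r) = s * ln alpha).
  { apply (Rmult_eq_reg_l 2); [|lra]. rewrite <- Rmult_assoc, <- ln_r_sq.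
    replace (r * r) with ((s * r) * (s * r))
      by (transitivity (s * s * (r * r)); [ring | rewrite golden_sign_sq; ring]).
    rewrite (ln_mult (s * r) (s * r)) by exact Hsr. ring. }
  rewrite alt_ratio_eq.
  replace (2 * s / (sqrt 5 * r)) with (/ (sqrt 5 / 2 * (s * r)))
    by (destruct golden_sign as [-> | ->]; field; lra).
  rewrite ln_Rinv, ln_mult by nra. lra.
Qed.

Lemma alt_even_rhs_powerRZ (t : Z) (m : nat) :
  alt_even_rhs (powerRZ r) t (2 * m) = harm_gf (2 * m) (- / 2 * r) * powerRZ r t.
Proof.
  pose proof sqrt5_bounds.
  set (z := / (r * r)).
  unfold alt_even_rhs, harm_gf.
  rewrite ln_alt_ratio, (harm_tail_even _ z m alt_ratio_sq alt_ratio_lin), alt_ratio_eq.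
  replace (2 * m / 2)%nat with m by (rewrite Nat.mul_comm, Nat.div_mul; lia).
  rewrite (sum_n_m_ext_loc_R _ (fun k => powerRZ r t * ((4 / 5) ^ (m - k) / (5 * INR k)
     * (z ^ (m - k) + (6 * INR k - 1) / (2 * INR k - 1) * z ^ (m - k + 1))))).
  2:{ intros k Hk.
      replace (t + 2 * Z.of_nat k - Z.of_nat (2 * m) - 2)%Z
        with (t - Z.of_nat (2 * (m - k + 1)))%Z by lia.
      replace (t + 2 * Z.of_nat k - Z.of_nat (2 * m))%Z
        with (t - Z.of_nat (2 * (m - k)))%Z by lia.
      rewrite !powerRZ_sub_double by assumption. fold z. ring. }
  rewrite sum_n_m_mult_l_R. set (T := sum_n_m _ 1 m).
  set (u := (t - Z.of_nat (2 * m) - 1)%Z).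
  replace (t - Z.of_nat (2 * m) - 2)%Z with (u - 1)%Z by (unfold u; ring).
  replace (t - Z.of_nat (2 * m))%Z with (u + 1)%Z by (unfold u; ring).
  rewrite powerRZ_golden_sum. unfold u.
  replace (t - Z.of_nat (2 * m) - 1)%Z with (t + - Z.of_nat (2 * m + 1))%Z by lia.
  rewrite powerRZ_add, powerRZ_neg', <- pow_powerRZ by assumption.
  assert (Hodd : (2 * s / (sqrt 5 * r)) ^ (2 * m + 1)
                 = s * ((2 / sqrt 5) ^ (2 * m + 1) / r ^ (2 * m + 1))).
  { unfold Rdiv.
    rewrite !Rpow_mult_distr, !pow_inv, Rpow_mult_distr, Rinv_mult, (pow_add s), (pow_mult s).
    replace (s ^ 2) with (s * s) by ring. rewrite golden_sign_sq, pow1, pow_1. ring. }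
  rewrite Hodd.
  pose proof (pow_nonzero r (2 * m + 1) r_neq0).
  destruct golden_sign as [-> | ->]; field; lra.
Qed.

Lemma alt_odd_rhs_powerRZ (t : Z) (m : nat) :
  alt_odd_rhs (powerRZ r) t (2 * m + 1) = harm_gf (2 * m + 1) (- / 2 * r) * powerRZ r t.
Proof.
  pose proof sqrt5_bounds.
  set (z := / (r * r)).
  unfold alt_odd_rhs, harm_gf.
  rewrite ln_alt_ratio, (harm_tail_odd _ z m alt_ratio_sq alt_ratio_lin).
  replace ((2 * m + 1 - 1) / 2)%nat with m
    by (replace (2 * m + 1 - 1)%nat with (m * 2)%nat by lia; rewrite Nat.div_mul; lia).
  rewrite (sum_n_m_ext_loc_R _ (fun k => powerRZ r t * ((4 / 5) ^ (m - k) / (2 * INR k - 1)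
     * ((14 * INR k - 5) / (4 * INR k) * z ^ (m + 1 - k) + z ^ (m + 2 - k))))).
  2:{ intros k Hk.
      replace (t + 2 * Z.of_nat k - Z.of_nat (2 * m + 1) - 3)%Z
        with (t - Z.of_nat (2 * (m + 2 - k)))%Z by lia.
      replace (t + 2 * Z.of_nat k - Z.of_nat (2 * m + 1) - 1)%Z
        with (t - Z.of_nat (2 * (m + 1 - k)))%Z by lia.
      rewrite !powerRZ_sub_double by assumption. fold z. ring. }
  rewrite sum_n_m_mult_l_R. set (T := sum_n_m _ 1 m).
  set (u := (t - Z.of_nat (2 * m + 1) - 1)%Z).
  replace (t - Z.of_nat (2 * m + 1) - 2)%Z with (u - 1)%Z by (unfold u; ring).
  replace (t - Z.of_nat (2 * m + 1))%Z with (u + 1)%Z by (unfold u; ring).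
  rewrite powerRZ_golden_sum. unfold u.
  replace (t - Z.of_nat (2 * m + 1) - 1)%Z with (t - Z.of_nat (2 * (m + 1)))%Z by lia.
  replace (t - 2)%Z with (t - Z.of_nat (2 * 1))%Z by reflexivity.
  rewrite !powerRZ_sub_double by assumption. fold z.
  replace (2 * m + 1 + 1)%nat with (2 * (m + 1))%nat by lia.
  rewrite !pow_mult.
  replace ((/ (1 - - / 2 * r)) ^ 2) with (/ (1 - - / 2 * r) * / (1 - - / 2 * r)) by ring.
  rewrite alt_ratio_sq.
  replace ((2 / sqrt 5) ^ 2) with (4 / 5)
    by (unfold Rdiv; rewrite Rpow_mult_distr, pow_inv, pow2_sqrt by lra; field).
  assert (INR (2 * m + 1) <> 0) by (apply not_0_INR; lia).
  fold z. replace (4 * z / 5) with (4 / 5 * z) by field. rewrite Rpow_mult_distr.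
  field. lra.
Qed.

Lemma is_series_plain_golden (t : Z) (p : nat) :
  is_series (plain_term (powerRZ r) t p) (plain_rhs (powerRZ r) t p).
Proof.
  rewrite plain_rhs_powerRZ.
  apply is_series_plain_term_powerRZ; [exact r_neq0 | apply Rabs_def1; lra].
Qed.

Lemma is_series_alt_even_golden (t : Z) (m : nat) :
  is_series (alt_term (powerRZ r) t (2 * m)) (alt_even_rhs (powerRZ r) t (2 * m)).
Proof.
  rewrite alt_even_rhs_powerRZ.
  apply is_series_alt_term_powerRZ; [exact r_neq0 | apply Rabs_def1; lra].
Qed.

Lemma is_series_alt_odd_golden (t : Z) (m : nat) :
  is_series (alt_term (powerRZ r) t (2 * m + 1)) (alt_odd_rhs (powerRZ r) t (2 * m + 1)).
Proof.
  rewrite alt_odd_rhs_powerRZ.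
  apply is_series_alt_term_powerRZ; [exact r_neq0 | apply Rabs_def1; lra].
Qed.

End GoldenRoot.

Theorem theorem19 (a b : R) (t : Z) (hab : ~ (a = 0 /\ b = 0)) :
  (forall p : nat,
     is_series
       (fun n : nat => binom (n + p) p * (harm n * gib a b (Z.of_nat n + t)) / 2 ^ n)
       ((harm p + ln 2) * 2 ^ (p + 1) * gib a b (t + 2 * Z.of_nat p + 2)
        + 2 ^ (p + 2) / sqrt 5
            * (gib a b (t + 2 * Z.of_nat p + 3) + gib a b (t + 2 * Z.of_nat p + 1))
            * ln alpha
        - 2 ^ (p + 1)
            * sum_n_m (fun k : nat =>
                 gib a b (t + 2 * Z.of_nat p - 2 * Z.of_nat k + 2) / (2 ^ k * INR k)) 1 p))
  /\
  (forall p : nat, Nat.Even p ->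
     is_series
       (fun n : nat =>
          (-1) ^ n * binom (n + p) p * (harm n * gib a b (Z.of_nat n + t)) / 2 ^ n)
       ((2 / sqrt 5) ^ (p + 1)
          * ((harm p - ln (sqrt 5 / 2)) / sqrt 5
               * (gib a b (t - Z.of_nat p) + gib a b (t - Z.of_nat p - 2))
             - gib a b (t - Z.of_nat p - 1) * ln alpha)
        - sum_n_m (fun k : nat =>
             (4 / 5) ^ (p / 2 - k) / (5 * INR k)
             * (gib a b (t + 2 * Z.of_nat k - Z.of_nat p)
                + (6 * INR k - 1) / (2 * INR k - 1)
                  * gib a b (t + 2 * Z.of_nat k - Z.of_nat p - 2))) 1 (p / 2)))
  /\
  (forall p : nat, Nat.Odd p ->
     is_series
       (fun n : nat =>
          (-1) ^ n * binom (n + p) p * (harm n * gib a b (Z.of_nat n + t)) / 2 ^ n)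
       ((2 / sqrt 5) ^ (p + 1)
          * ((harm p - ln (sqrt 5 / 2)) * gib a b (t - Z.of_nat p - 1)
             - ln alpha / sqrt 5
               * (gib a b (t - Z.of_nat p) + gib a b (t - Z.of_nat p - 2)))
        - 8 / 25
          * sum_n_m (fun k : nat =>
               (4 / 5) ^ ((p - 1) / 2 - k) / (2 * INR k - 1)
               * ((14 * INR k - 5) / (4 * INR k)
                    * gib a b (t + 2 * Z.of_nat k - Z.of_nat p - 1)
                  + gib a b (t + 2 * Z.of_nat k - Z.of_nat p - 3))) 1 ((p - 1) / 2)
        - 2 * (gib a b t + gib a b (t - 2)) / (5 * INR p))).
Proof.
  split; [|split].
  - intros p.
    apply (is_series_binet (fun G => plain_term G t p) (fun G => plain_rhs G t p)).
    + apply plain_term_linear.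
    + apply plain_rhs_linear.
    + exact (is_series_plain_golden _ _ alpha_sq alpha_sign ln_alpha_sq t p).
    + exact (is_series_plain_golden _ _ beta_sq beta_sign ln_beta_sq t p).
  - intros p [m ->].
    apply (is_series_binet (fun G => alt_term G t (2 * m)) (fun G => alt_even_rhs G t (2 * m))).
    + apply alt_term_linear.
    + apply alt_even_rhs_linear.
    + exact (is_series_alt_even_golden _ _ alpha_sq alpha_sign ln_alpha_sq t m).
    + exact (is_series_alt_even_golden _ _ beta_sq beta_sign ln_beta_sq t m).
  - intros p [m ->].
    apply (is_series_binet (fun G => alt_term G t (2 * m + 1))
                           (fun G => alt_odd_rhs G t (2 * m + 1))).
    + apply alt_term_linear.
    + apply alt_odd_rhs_linear.
    + exact (is_series_alt_odd_golden _ _ alpha_sq alpha_sign ln_alpha_sq t m).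
    + exact (is_series_alt_odd_golden _ _ beta_sq beta_sign ln_beta_sq t m).
Qed.
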